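(* Let $\varphi$ be a propositional (Boolean) formula and let $W$ be a set of valuations. Then for every $w\in W$: $w\models\varphi$ if and only if $w\models\bigvee_{v\in\mathrm{base}(\varphi,W)}\bigwedge_{\ell\in v}\ell$.
   Context: Fix a set $\mathrm{Prop}$ of propositional atoms; a literal is $p$ or $\neg p$ for $p\in\mathrm{Prop}$. A valuation is a maximal consistent set of literals (identified with a truth assignment); $w\models\varphi$ means the valuation $w$ satisfies the Boolean formula $\varphi$. A subvaluation is a subset of a valuation. An atom $p$ is essential to $\varphi$ iff $p$ occurs in every formula classically equivalent to $\varphi$. Given a set $W$ of valuations, a subvaluation $v$ satisfies $\varphi$ modulo $W$ iff every $u\in W$ with $v\subseteq u$ satisfies $\varphi$; $v$ essentially satisfies $\varphi$ modulo $W$ iff it satisfies $\varphi$ modulo $W$ and every atom occurring (positively or negatively) in a literal of $v$ is essential to $\varphi$; $v$ is a prime subvaluation of $\varphi$ modulo $W$ iff $v$ essentially satisfies $\varphi$ modulo $W$ and no proper subset of $v$ does. $\mathrm{base}(\varphi,W)$ denotes the set of all prime subvaluations of $\varphi$ modulo $W$. *)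

Set Implicit Arguments.

Inductive form (A : Type) : Type :=
| FTop : form A
| FBot : form A
| FVar : A -> form A
| FNot : form A -> form A
| FAnd : form A -> form A -> form A
| FOr  : form A -> form A -> form A
| FImp : form A -> form A -> form A.

Arguments FTop {A}. Arguments FBot {A}.

(* A valuation (maximal consistent set of literals) identified with a truth assignment *)
Definition valuation (A : Type) := A -> bool.

Fixpoint eval (A : Type) (w : valuation A) (f : form A) : bool :=
  match f with
  | FTop => true
  | FBot => false
  | FVar p => w p
  | FNot g => negb (eval w g)
  | FAnd g h => andb (eval w g) (eval w h)
  | FOr g h => orb (eval w g) (eval w h)
  | FImp g h => orb (negb (eval w g)) (eval w h)
  end.

Definition models (A : Type) (w : valuation A) (f : form A) : Prop := eval w f = true.

(* literal: (p, true) is p, (p, false) is ~p *)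
Definition literal (A : Type) := (A * bool)%type.
Definition lit_atom (A : Type) (l : literal A) : A := fst l.

Definition lit_in (A : Type) (l : literal A) (w : valuation A) : Prop := w (fst l) = snd l.

Definition litset (A : Type) := literal A -> Prop.
Definition valset (A : Type) := valuation A -> Prop.

Definition sub_val (A : Type) (v : litset A) (w : valuation A) : Prop :=
  forall l, v l -> lit_in l w.

Definition subvaluation (A : Type) (v : litset A) : Prop :=
  exists w : valuation A, sub_val v w.

Fixpoint occurs (A : Type) (p : A) (f : form A) : Prop :=
  match f with
  | FTop | FBot => False
  | FVar q => q = p
  | FNot g => occurs p g
  | FAnd g h | FOr g h | FImp g h => occurs p g \/ occurs p h
  end.

Definition equivalent (A : Type) (f g : form A) : Prop :=
  forall w : valuation A, eval w f = eval w g.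

Definition essential (A : Type) (p : A) (f : form A) : Prop :=
  forall g : form A, equivalent g f -> occurs p g.

Definition sat_mod (A : Type) (v : litset A) (f : form A) (W : valset A) : Prop :=
  forall u, W u -> sub_val v u -> models u f.

Definition ess_sat_mod (A : Type) (v : litset A) (f : form A) (W : valset A) : Prop :=
  subvaluation v /\ sat_mod v f W /\ (forall l, v l -> essential (lit_atom l) f).

Definition proper_subset (A : Type) (v' v : litset A) : Prop :=
  (forall l, v' l -> v l) /\ (exists l, v l /\ ~ v' l).

Definition prime_subval (A : Type) (v : litset A) (f : form A) (W : valset A) : Prop :=
  ess_sat_mod v f W /\ (forall v', proper_subset v' v -> ~ ess_sat_mod v' f W).

Definition base (A : Type) (f : form A) (W : valset A) : litset A -> Prop :=
  fun v => prime_subval v f W.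

(* w |= \/_{v in B} /\_{l in v} l   (semantics of the disjunction of conjunctions) *)
Definition models_dnf (A : Type) (w : valuation A) (B : litset A -> Prop) : Prop :=
  exists v, B v /\ (forall l, v l -> lit_in l w).

(* A formula depends only on its essential atoms: an inessential atom can be
   deleted from some equivalent formula, so flipping it does not change the
   truth value.  Hence if w satisfies phi, the literals of w on the essential
   atoms of phi essentially satisfy phi modulo any W.  There are finitely many
   of them (essential atoms occur in phi), so they contain a minimal essentially
   satisfying set, which is a prime subvaluation true in w.  Conversely a prime
   subvaluation contained in w satisfies phi modulo W, so w satisfies phi. *)

From Stdlib Require Import List Classical ClassicalEpsilon Lia Wf_nat.
Import ListNotations.

Fixpoint atoms {A : Type} (f : form A) : list A :=
  match f with
  | FTop | FBot => []
  | FVar q => [q]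
  | FNot g => atoms g
  | FAnd g h | FOr g h | FImp g h => atoms g ++ atoms h
  end.

Lemma occurs_atoms (A : Type) (p : A) (f : form A) : occurs p f -> In p (atoms f).
Proof.
  induction f; simpl; intros H; try tauto; try (subst; auto);
  apply in_or_app; tauto.
Qed.

Lemma essential_occurs (A : Type) (p : A) (f : form A) : essential p f -> occurs p f.
Proof. intros H; apply H; intros w; reflexivity. Qed.

Lemma eval_ext (A : Type) (f : form A) (u w : valuation A) :
  (forall p, occurs p f -> u p = w p) -> eval u f = eval w f.
Proof.
  induction f; simpl; intros H; auto;
  try (rewrite IHf1, IHf2 by (intros; apply H; tauto); reflexivity).
  rewrite IHf; auto.
Qed.

Definition upd {A : Type} (u : valuation A) (a : A) (b : bool) : valuation A :=
  fun p => if excluded_middle_informative (p = a) then b else u p.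

Lemma eval_upd_inessential (A : Type) (f : form A) (u : valuation A) (a : A) (b : bool) :
  ~ essential a f -> eval (upd u a b) f = eval u f.
Proof.
  intros Hne. apply not_all_ex_not in Hne as [g Hg].
  apply imply_to_and in Hg as [Hgf Hag].
  rewrite <- (Hgf u), <- (Hgf (upd u a b)). apply eval_ext.
  intros p Hp. unfold upd.
  destruct (excluded_middle_informative (p = a)); [subst; contradiction | reflexivity].
Qed.

Lemma eval_upd_same (A : Type) (f : form A) (u : valuation A) (a : A) :
  eval (upd u a (u a)) f = eval u f.
Proof.
  apply eval_ext. intros p _. unfold upd.
  destruct (excluded_middle_informative (p = a)); subst; reflexivity.
Qed.

(* Move u towards w one atom of L at a time. *)
Lemma eval_agree_essential_outside (A : Type) (f : form A) (w : valuation A) (L : list A) :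
  forall u : valuation A,
  (forall p, occurs p f -> ~ In p L -> u p = w p) ->
  (forall p, essential p f -> u p = w p) ->
  eval u f = eval w f.
Proof.
  induction L as [|a L IH]; intros u Hout Hess.
  - apply eval_ext. intros p Hp; apply Hout; auto.
  - assert (Hstep : eval (upd u a (w a)) f = eval u f).
    { destruct (classic (essential a f)) as [Ha | Ha].
      - rewrite <- (Hess a Ha). apply eval_upd_same.
      - apply eval_upd_inessential; exact Ha. }
    rewrite <- Hstep. apply IH; intros p; unfold upd;
      destruct (excluded_middle_informative (p = a)) as [-> | Hpa]; auto.
    intros Hp HpL. apply Hout; [exact Hp | intros [-> | ?]; auto].
Qed.

Lemma eval_agree_essential (A : Type) (f : form A) (u w : valuation A) :
  (forall p, essential p f -> u p = w p) -> eval u f = eval w f.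
Proof.
  apply (eval_agree_essential_outside A f w (atoms f)).
  intros p Hp Hn; contradiction (Hn (occurs_atoms _ _ _ Hp)).
Qed.

Lemma classical_filter (X : Type) (P : X -> Prop) (S : list X) :
  exists S', (forall x, In x S' <-> In x S /\ P x) /\ length S' <= length S /\
    ((exists x, In x S /\ ~ P x) -> length S' < length S).
Proof.
  induction S as [|a S IH].
  - exists []; simpl; split; [tauto | split; [lia |]]. intros [x [[] _]].
  - destruct IH as [S' [HS' [Hle Hlt]]].
    destruct (classic (P a)) as [Pa | nPa].
    + exists (a :: S'); simpl; split; [| split; [lia |]].
      * intros x; rewrite HS'; split; [intros [<- | ?] | intros [[<- | ?] ?]]; tauto.
      * intros [x [[<- | Hx] nPx]]; [contradiction |].
        assert (length S' < length S) by eauto. lia.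
    + exists S'; simpl; split; [| split; [lia | intros _; lia]].
      intros x; rewrite HS'; split; [tauto |].
      intros [[<- | ?] ?]; tauto.
Qed.

Lemma exists_minimal_subset (A : Type) (Q : litset A -> Prop) (S : list (literal A)) :
  forall v : litset A, Q v -> (forall l, v l -> In l S) ->
  exists m, Q m /\ (forall l, m l -> v l) /\
    (forall m', proper_subset m' m -> ~ Q m').
Proof.
  remember (length S) as n eqn:Hn. revert S Hn.
  induction n as [n IH] using lt_wf_ind; intros S Hn v Qv HvS.
  destruct (classic (exists v', proper_subset v' v /\ Q v'))
    as [[v' [[Hv'v [l0 [Hl0 Hnl0]]] Qv']] | Hmin].
  - destruct (classical_filter _ v' S) as [S' [HS' [_ Hlt]]].
    destruct (IH (length S') ltac:(subst; eauto) S' eq_refl v' Qv')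
      as [m [Qm [Hmv' Hmin]]].
    + intros l Hl; apply HS'; auto.
    + exists m; auto.
  - exists v; split; [exact Qv | split; [auto |]].
    intros m' Hm' Qm'; apply Hmin; eauto.
Qed.

Lemma ess_sat_mod_essential_literals (A : Type) (phi : form A) (W : valset A)
  (w : valuation A) :
  models w phi ->
  ess_sat_mod (fun l => lit_in l w /\ essential (lit_atom l) phi) phi W.
Proof.
  intros Hw. split; [| split].
  - exists w; intros l [Hl _]; exact Hl.
  - intros u _ Hu. unfold models. rewrite <- Hw. apply eval_agree_essential.
    intros p Hp. rewrite (Hu (p, w p)); split; [reflexivity | exact Hp].
  - intros l [_ Hl]; exact Hl.
Qed.

Theorem theorem2 (A : Type) (phi : form A) (W : valset A) :
  forall w : valuation A, W w ->
    (models w phi <-> models_dnf w (base phi W)).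
Proof.
  intros w Ww. split.
  - intros Hw.
    destruct (exists_minimal_subset _ (fun v => ess_sat_mod v phi W)
                (map (fun p => (p, w p)) (atoms phi))
                _ (ess_sat_mod_essential_literals _ _ W _ Hw))
      as [m [Hm [Hmw Hmin]]].
    + intros [p b] [Hpb Hp]. apply in_map_iff. exists p.
      split; [unfold lit_in in Hpb; simpl in Hpb; subst; reflexivity |].
      apply occurs_atoms, essential_occurs, Hp.
    + exists m; split; [split; assumption |].
      intros l Hl; apply Hmw, Hl.
  - intros [v [[[_ [Hsat _]] _] Hvw]]. apply Hsat; assumption.
Qed.
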